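(* Let $t$ be a closed term and suppose $t\to_w^h a_s$ with $a_s$ a strict answer. Then (1) $t\to_y^k a_s$ for some $k\in\mathbb{N}$; and (2) $h\leq k$.
   Context: Terms: $t ::= x \mid \lambda x.t \mid t\,u \mid t[x\backslash u]$ ($t[x\backslash u]$ an explicit substitution binding $x$ in $t$; terms up to $\alpha$). Values $v ::= \lambda x.t$. Substitution contexts $S ::= \langle\cdot\rangle\mid S[x\backslash u]$. Weak contexts $W ::= \langle\cdot\rangle \mid W\,t \mid t\,W \mid t[x\backslash W] \mid W[x\backslash u]$. For a class of contexts $K$, $K\langle\langle t\rangle\rangle$ is plugging without capture of free variables of $t$. Root rules: $S\langle\lambda x.t\rangle u\mapsto_m S\langle t[x\backslash u]\rangle$; $K\langle\langle x\rangle\rangle[x\backslash u]\mapsto_{e_K} K\langle\langle u\rangle\rangle[x\backslash u]$; $t[x\backslash S\langle v\rangle]\mapsto_{gcv} S\langle t\rangle$ if $x\notin\mathrm{fv}(t)$. $\to_w$ is the union of the closures under weak contexts of $\mapsto_m$, $\mapsto_{e_W}$ ($K$ = weak contexts), $\mapsto_{gcv}$; $\to^h$ denotes exactly $h$ steps. Call-by-silly strategy: answers $a ::= v\mid a[x\backslash a']$; name contexts $N ::= \langle\cdot\rangle\mid N t\mid N[x\backslash t]$; auxiliary contexts $A ::= \langle\cdot\rangle\mid a[x\backslash A]\mid A[x\backslash t]$; silly contexts $Y ::= A\langle N\rangle$; $\to_{ym} := Y\langle\mapsto_m\rangle$; $\to_{yeAY} := A\langle\mapsto_{e_Y}\rangle$;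 $\to_{yeYN} := Y\langle\mapsto_{e_N}\rangle$; $\to_{ygcv}:=Y\langle\mapsto_{gcv}\rangle$; $\to_y$ is their union. Strict answers: $a_s ::= v\mid a_s[x\backslash a_s']$ with $x\in\mathrm{fv}(a_s)$. *)

(* Terms of the linear-substitution-calculus style calculus
   with explicit substitutions, in de Bruijn representation (so terms are
   identified up to alpha-equivalence by construction). *)
From Stdlib Require Import Arith List.
Import ListNotations.

(* t ::= x | \x.t | t u | t[x\u] ;  in [ES t u] (= t[x\u]) index 0 of t
   is bound to the substitution; u is not under the binder. *)
Inductive term : Type :=
| Var : nat -> term
| Lam : term -> term
| App : term -> term -> term
| ES  : term -> term -> term.

Fixpoint lift (c k : nat) (t : term) : term :=
  match t with
  | Var n => Var (if Nat.leb c n then n + k else n)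
  | Lam b => Lam (lift (S c) k b)
  | App t1 t2 => App (lift c k t1) (lift c k t2)
  | ES t1 t2 => ES (lift (S c) k t1) (lift c k t2)
  end.

(* remove the (unused) index c: free indices > c are decremented *)
Fixpoint lower (c : nat) (t : term) : term :=
  match t with
  | Var n => Var (if Nat.ltb c n then pred n else n)
  | Lam b => Lam (lower (S c) b)
  | App t1 t2 => App (lower c t1) (lower c t2)
  | ES t1 t2 => ES (lower (S c) t1) (lower c t2)
  end.

Fixpoint occurs (n : nat) (t : term) : bool :=
  match t with
  | Var m => Nat.eqb n m
  | Lam b => occurs (S n) b
  | App t1 t2 => occurs n t1 || occurs n t2
  | ES t1 t2 => occurs (S n) t1 || occurs n t2
  end.

Fixpoint closed_at (n : nat) (t : term) : Prop :=
  match t with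
  | Var m => m < n
  | Lam b => closed_at (S n) b
  | App t1 t2 => closed_at n t1 /\ closed_at n t2
  | ES t1 t2 => closed_at (S n) t1 /\ closed_at n t2
  end.

Definition closed (t : term) : Prop := closed_at 0 t.

Definition is_value (t : term) : Prop := exists b, t = Lam b.

Inductive answer : term -> Prop :=
| ans_val : forall b, answer (Lam b)
| ans_es  : forall a a', answer a -> answer a' -> answer (ES a a').

Inductive strict_answer : term -> Prop :=
| sans_val : forall b, strict_answer (Lam b)
| sans_es  : forall a a', strict_answer a -> strict_answer a' ->
             occurs 0 a = true -> strict_answer (ES a a').

(* substitution contexts S ::= <> | S[x\u]; the list lists the u's,
   outermost first *)
Definition sctx := list term.
Fixpoint plugS (s : sctx) (t : term) : term :=
  match s with
  | [] => t
  | u :: s' => ES (plugS s' t) u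
  end.
(* number of binders crossed by the hole = length s *)

Inductive wctx : Type :=
| WHole : wctx
| WAppL : wctx -> term -> wctx
| WAppR : term -> wctx -> wctx
| WESArg : term -> wctx -> wctx
| WESBody : wctx -> term -> wctx.

Fixpoint plugW (W : wctx) (t : term) : term :=
  match W with
  | WHole => t
  | WAppL W' u => App (plugW W' t) u
  | WAppR u W' => App u (plugW W' t)
  | WESArg u W' => ES u (plugW W' t)
  | WESBody W' u => ES (plugW W' t) u
  end.

Fixpoint depthW (W : wctx) : nat :=
  match W with
  | WHole => 0
  | WAppL W' _ => depthW W'
  | WAppR _ W' => depthW W'
  | WESArg _ W' => depthW W'
  | WESBody W' _ => S (depthW W')
  end.

Inductive nctx : Type :=
| NHole : nctx
| NAppL : nctx -> term -> nctx
| NESBody : nctx -> term -> nctx.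

Fixpoint plugN (N : nctx) (t : term) : term :=
  match N with
  | NHole => t
  | NAppL N' u => App (plugN N' t) u
  | NESBody N' u => ES (plugN N' t) u
  end.

Fixpoint depthN (N : nctx) : nat :=
  match N with
  | NHole => 0
  | NAppL N' _ => depthN N'
  | NESBody N' _ => S (depthN N')
  end.

(* auxiliary contexts A ::= <> | a[x\A] | A[x\t] ; the side condition that
   the body in a[x\A] is an answer is imposed by [validA] *)
Inductive actx : Type :=
| AHole : actx
| AESArg : term -> actx -> actx
| AESBody : actx -> term -> actx.

Fixpoint validA (A : actx) : Prop :=
  match A with
  | AHole => True
  | AESArg a A' => answer a /\ validA A'
  | AESBody A' _ => validA A'
  end.

Fixpoint plugA (A : actx) (t : term) : term :=
  match A with
  | AHole => t
  | AESArg a A' => ES a (plugA A' t)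
  | AESBody A' u => ES (plugA A' t) u
  end.

Fixpoint depthA (A : actx) : nat :=
  match A with
  | AHole => 0
  | AESArg _ A' => depthA A'
  | AESBody A' _ => S (depthA A')
  end.

Definition plugY (A : actx) (N : nctx) (t : term) : term := plugA A (plugN N t).
Definition depthY (A : actx) (N : nctx) : nat := depthA A + depthN N.

(* S<\x.t> u  |->_m  S<t[x\u]>   (u lifted over the binders of S) *)
Inductive root_m : term -> term -> Prop :=
| RootM : forall s b u,
    root_m (App (plugS s (Lam b)) u) (plugS s (ES b (lift 0 (length s) u))).

Inductive root_gcv : term -> term -> Prop :=
| RootGcv : forall t s v, is_value v -> occurs 0 t = false ->
    root_gcv (ES t (plugS s v)) (plugS s (lift 0 (length s) (lower 0 t))).

(* K<<x>>[x\u] |->_{e_K} K<<u>>[x\u] : the occurrence of x at the hole is the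
   index [depth K] (it refers to the substitution, not captured by K), and u
   is plugged without capture, i.e. lifted by depth K + 1. *)
Inductive root_eW : term -> term -> Prop :=
| RootEW : forall K u,
    root_eW (ES (plugW K (Var (depthW K))) u)
            (ES (plugW K (lift 0 (S (depthW K)) u)) u).

Inductive root_eN : term -> term -> Prop :=
| RootEN : forall N u,
    root_eN (ES (plugN N (Var (depthN N))) u)
            (ES (plugN N (lift 0 (S (depthN N)) u)) u).

Inductive root_eY : term -> term -> Prop :=
| RootEY : forall A N u, validA A ->
    root_eY (ES (plugY A N (Var (depthY A N))) u)
            (ES (plugY A N (lift 0 (S (depthY A N)) u)) u).

Inductive w_root : term -> term -> Prop :=
| WRm : forall t u, root_m t u -> w_root t u
| WReW : forall t u, root_eW t u -> w_root t u
| WRgcv : forall t u, root_gcv t u -> w_root t u.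

Inductive w_step : term -> term -> Prop :=
| WStep : forall W r r', w_root r r' -> w_step (plugW W r) (plugW W r').

Inductive y_step : term -> term -> Prop :=
| Y_m : forall A N r r', validA A -> root_m r r' ->
    y_step (plugY A N r) (plugY A N r')
| Y_eAY : forall A r r', validA A -> root_eY r r' ->
    y_step (plugA A r) (plugA A r')
| Y_eYN : forall A N r r', validA A -> root_eN r r' ->
    y_step (plugY A N r) (plugY A N r')
| Y_gcv : forall A N r r', validA A -> root_gcv r r' ->
    y_step (plugY A N r) (plugY A N r').

Inductive nsteps (R : term -> term -> Prop) : nat -> term -> term -> Prop :=
| ns0 : forall t, nsteps R 0 t t
| nsS : forall n t u v, R t u -> nsteps R n u v -> nsteps R (S n) t v.

From Stdlib Require Import Arith Lia List Bool.
Import ListNotations.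

(* A weak step is a parallel step contracting one redex, where a parallel
   step may also substitute variables bound by enclosing substitutions.  A
   parallel step of cost [n >= 1] from [t] followed by [k] silly steps to a
   strict answer gives at least [k + 1] silly steps from [t]: a closed [t]
   that is not a strict answer has a silly step (strict answers have no
   parallel redexes), and that step is either one of the redexes of the
   parallel step, leaving a parallel step of cost [n - 1], or has a residual
   after it, reached from its target by a parallel step of cost [>= n].  As
   silly steps have the diamond property, every silly reduction to the
   normal strict answer has length [k], so the residual starts one of them
   and induction on [k] applies. *)

Definition up (f : nat -> nat) : nat -> nat :=
  fun n => match n with 0 => 0 | S m => S (f m) end.

Fixpoint ren (f : nat -> nat) (t : term) : term :=
  match t with
  | Var n => Var (f n)
  | Lam b => Lam (ren (up f) b)
  | App a b => App (ren f a) (ren f b)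
  | ES a b => ES (ren (up f) a) (ren f b)
  end.

Lemma ren_ext_occurs t : forall f g,
  (forall n, occurs n t = true -> f n = g n) -> ren f t = ren g t.
Proof.
  induction t; intros f g H; simpl in *; f_equal.
  - apply H, Nat.eqb_refl.
  - apply IHt. intros [|n] Hn; simpl; auto.
  - apply IHt1. intros n Hn. apply H. rewrite Hn. reflexivity.
  - apply IHt2. intros n Hn. apply H. rewrite Hn, orb_true_r. reflexivity.
  - apply IHt1. intros [|n] Hn; simpl; auto. f_equal. apply H. rewrite Hn. reflexivity.
  - apply IHt2. intros n Hn. apply H. rewrite Hn, orb_true_r. reflexivity.
Qed.

Lemma ren_ext t f g : (forall n, f n = g n) -> ren f t = ren g t.
Proof. intros H. apply ren_ext_occurs. auto. Qed.

Lemma ren_ren t : forall f g, ren f (ren g t) = ren (fun n => f (g n)) t.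
Proof.
  induction t; intros f g; simpl; f_equal;
    rewrite ?IHt, ?IHt1, ?IHt2; auto; apply ren_ext; intros [|n]; reflexivity.
Qed.

Lemma occurs_ren t : forall i f,
  occurs i (ren f t) = true <-> exists j, occurs j t = true /\ f j = i.
Proof.
  induction t; intros i f; simpl.
  - rewrite Nat.eqb_eq. split.
    + intros ->. exists n. rewrite Nat.eqb_refl. auto.
    + intros [j [Hj <-]]. apply Nat.eqb_eq in Hj. congruence.
  - rewrite IHt. split.
    + intros [[|j] [Hj E]]; simpl in E; [discriminate|]. exists j. auto.
    + intros [j [Hj <-]]. exists (S j). auto.
  - rewrite orb_true_iff, IHt1, IHt2. split.
    + intros [[j [H1 H2]]|[j [H1 H2]]]; exists j; rewrite H1; auto with bool.
    + intros [j [H1 H2]]. apply orb_true_iff in H1 as [H1|H1]; [left|right]; eauto.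
  - rewrite orb_true_iff, IHt1, IHt2. split.
    + intros [[[|j] [H1 H2]]|[j [H1 H2]]]; simpl in H2; [discriminate| |].
      * injection H2 as H2. exists j. rewrite H1. auto.
      * exists j. rewrite H1. auto with bool.
    + intros [j [H1 H2]]. apply orb_true_iff in H1 as [H1|H1].
      * left. exists (S j). simpl. rewrite H2. auto.
      * right. eauto.
Qed.

Lemma lift_ren t : forall c k,
  lift c k t = ren (fun n => if c <=? n then n + k else n) t.
Proof.
  induction t; intros c k; simpl; f_equal; rewrite ?IHt, ?IHt1, ?IHt2; auto;
    apply ren_ext; intros [|n]; simpl; auto; destruct (c <=? n); auto.
Qed.

Lemma lift0_ren t k : lift 0 k t = ren (fun n => n + k) t.
Proof. apply lift_ren. Qed.

Definition lower_fun (c : nat) : nat -> nat := fun n => if c <? n then pred n else n.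

Lemma lower_ren t : forall c, lower c t = ren (lower_fun c) t.
Proof.
  unfold lower_fun.
  induction t; intros c; simpl; f_equal; rewrite ?IHt, ?IHt1, ?IHt2; auto;
    apply ren_ext; intros [|n]; [reflexivity| |reflexivity|]; simpl;
    destruct (Nat.ltb_spec (S c) (S n)), (Nat.ltb_spec c n); lia.
Qed.

Lemma lift0_lift0 t j k : lift 0 j (lift 0 k t) = lift 0 (k + j) t.
Proof. rewrite !lift0_ren, ren_ren. apply ren_ext. intros; lia. Qed.

Lemma lift0_0 t : lift 0 0 t = t.
Proof.
  rewrite lift0_ren. transitivity (ren (fun n => n) t); [apply ren_ext; intros; lia|].
  clear. induction t; simpl; f_equal; auto;
    [rewrite <- IHt at 2 | rewrite <- IHt1 at 2]; apply ren_ext; intros []; auto.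
Qed.

Lemma lift_S t k : lift 0 (S k) t = lift 0 k (lift 0 1 t).
Proof. rewrite lift0_lift0. reflexivity. Qed.

Lemma ren_up_lift1 t f : ren (up f) (lift 0 1 t) = lift 0 1 (ren f t).
Proof.
  rewrite !lift0_ren, !ren_ren. apply ren_ext. intros n.
  replace (n + 1) with (S n) by lia. simpl. lia.
Qed.

Lemma occurs_lift0 t i k :
  occurs i (lift 0 k t) = true <-> k <= i /\ occurs (i - k) t = true.
Proof.
  rewrite lift0_ren, occurs_ren. split.
  - intros [j [Hj <-]]. replace (j + k - k) with j by lia. auto with arith.
  - intros [H1 H2]. exists (i - k). split; auto; lia.
Qed.

Lemma occurs_lift0_below t i k : i < k -> occurs i (lift 0 k t) = false.
Proof.
  intros Hi. destruct (occurs i (lift 0 k t)) eqn:E; auto.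
  apply occurs_lift0 in E. lia.
Qed.

Definition upn (k : nat) (f : nat -> nat) : nat -> nat :=
  fun n => if n <? k then n else f (n - k) + k.

Fixpoint rens (f : nat -> nat) (s : sctx) : sctx :=
  match s with
  | [] => []
  | u :: s' => ren f u :: rens (up f) s'
  end.

Lemma length_rens s : forall f, length (rens f s) = length s.
Proof. induction s; intros; simpl; auto. Qed.

Lemma ren_plugS s : forall t f,
  ren f (plugS s t) = plugS (rens f s) (ren (upn (length s) f) t).
Proof.
  induction s as [|u s IH]; intros t f; simpl.
  - apply ren_ext. intros n. unfold upn. simpl. rewrite Nat.sub_0_r, Nat.add_0_r. reflexivity.
  - rewrite IH. do 2 f_equal. apply ren_ext. intros n. unfold upn, up.
    destruct (Nat.ltb_spec n (length s)), (Nat.ltb_spec n (S (length s))); try lia.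
    all: destruct (n - length s) as [|m] eqn:E; try lia.
    replace (n - S (length s)) with m by lia. lia.
Qed.

Lemma plugS_app s1 s2 t : plugS (s1 ++ s2) t = plugS s1 (plugS s2 t).
Proof. induction s1; simpl; f_equal; auto. Qed.

Lemma plugS_Lam_inj s : forall s' c c',
  plugS s (Lam c) = plugS s' (Lam c') -> s = s' /\ c = c'.
Proof.
  induction s; destruct s'; simpl; intros c c' H; try discriminate.
  - injection H; auto.
  - injection H as H1 ->. apply IHs in H1 as [-> ->]. auto.
Qed.

Fixpoint occurs_sctx (i : nat) (s : sctx) : bool :=
  match s with
  | [] => false
  | u :: s' => occurs i u || occurs_sctx (S i) s'
  end.

Lemma occurs_plugS s : forall t i,
  occurs i (plugS s t) = occurs_sctx i s || occurs (i + length s) t.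
Proof.
  induction s as [|u s IH]; intros t i; simpl.
  - rewrite Nat.add_0_r. reflexivity.
  - rewrite IH. replace (S i + length s) with (i + S (length s)) by lia.
    destruct (occurs i u), (occurs_sctx (S i) s), (occurs (i + S (length s)) t); reflexivity.
Qed.

Lemma root_m_inv a b r : root_m (App a b) r ->
  exists s c, a = plugS s (Lam c) /\ r = plugS s (ES c (lift 0 (length s) b)).
Proof. inversion 1; eauto. Qed.

Lemma root_gcv_inv a b r : root_gcv (ES a b) r ->
  exists s c, b = plugS s (Lam c) /\ occurs 0 a = false /\
    r = plugS s (lift 0 (length s) (lower 0 a)).
Proof. inversion 1 as [? ? ? [c ->]]. eauto. Qed.

Lemma root_gcv_intro a s c : occurs 0 a = false ->
  root_gcv (ES a (plugS s (Lam c))) (plugS s (lift 0 (length s) (lower 0 a))).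
Proof. intros. apply RootGcv; [eexists|]; eauto. Qed.

Lemma root_m_fun r r1 r2 : root_m r r1 -> root_m r r2 -> r1 = r2.
Proof.
  intros [s b u] H2. apply root_m_inv in H2 as (s' & c' & E & ->).
  apply plugS_Lam_inj in E as [-> ->]. reflexivity.
Qed.

Lemma root_gcv_fun r r1 r2 : root_gcv r r1 -> root_gcv r r2 -> r1 = r2.
Proof.
  intros [t s v [c ->] _] H2. apply root_gcv_inv in H2 as (s' & c' & E & _ & ->).
  apply plugS_Lam_inj in E as [-> ->]. reflexivity.
Qed.

Lemma root_m_ren r r' f : root_m r r' -> root_m (ren f r) (ren f r').
Proof.
  intros [s b u]. simpl. rewrite !ren_plugS. simpl.
  replace (ren (upn (length s) f) (lift 0 (length s) u))
    with (lift 0 (length (rens f s)) (ren f u)); [apply RootM|].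
  rewrite length_rens, !lift0_ren, !ren_ren. apply ren_ext. intros n. unfold upn.
  destruct (Nat.ltb_spec (n + length s) (length s)); [lia|].
  do 2 f_equal. lia.
Qed.

Lemma occurs0_ren_up t f : occurs 0 t = false -> occurs 0 (ren (up f) t) = false.
Proof.
  intros H. destruct (occurs 0 (ren (up f) t)) eqn:E; auto.
  apply occurs_ren in E as [[|j] [Hj E]]; simpl in E; congruence.
Qed.

Lemma root_gcv_ren r r' f : root_gcv r r' -> root_gcv (ren f r) (ren f r').
Proof.
  intros [t s v [c ->] H0]. simpl. rewrite !ren_plugS. simpl.
  replace (ren (upn (length s) f) (lift 0 (length s) (lower 0 t)))
    with (lift 0 (length (rens f s)) (lower 0 (ren (up f) t)));
    [apply root_gcv_intro, occurs0_ren_up; auto|].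
  rewrite length_rens, !lift0_ren, !lower_ren, !ren_ren. apply ren_ext_occurs.
  intros [|m] Hm; [congruence|]. unfold lower_fun, upn, up; simpl.
  destruct (Nat.ltb_spec (m + length s) (length s)); [lia|].
  replace (m + length s - length s) with m by lia. reflexivity.
Qed.

(* An environment lists the arguments of the explicit substitutions
   enclosing a position, innermost first: entry [i] is bound to index [i]
   and lives outside [S i] binders. *)
Definition env_get (e : list term) (i : nat) : term := lift 0 (S i) (nth i e (Var 0)).

Definition ren_env_compat (f : nat -> nat) (e e' : list term) (t : term) : Prop :=
  forall i, i < length e -> occurs i t = true ->
    f i < length e' /\ env_get e' (f i) = ren f (env_get e i).

Section RenEnvCompat.
Variables (f : nat -> nat) (e e' : list term).

Lemma ren_env_compat_sub t t' : ren_env_compat f e e' t ->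
  (forall i, occurs i t' = true -> occurs i t = true) -> ren_env_compat f e e' t'.
Proof. unfold ren_env_compat. auto. Qed.

Lemma ren_env_compat_App a b : ren_env_compat f e e' (App a b) ->
  ren_env_compat f e e' a /\ ren_env_compat f e e' b.
Proof.
  split; eapply ren_env_compat_sub; eauto; simpl; intros i ->; auto with bool.
Qed.

Lemma ren_env_compat_ES_arg a b : ren_env_compat f e e' (ES a b) ->
  ren_env_compat f e e' b.
Proof. intros H. eapply ren_env_compat_sub; eauto. simpl. intros i ->. auto with bool. Qed.

Lemma ren_env_compat_ES_body a b : ren_env_compat f e e' (ES a b) ->
  ren_env_compat (up f) (b :: e) (ren f b :: e') a.
Proof.
  unfold ren_env_compat, env_get. intros H [|i] Hi Ho; simpl.
  - split; [lia|]. rewrite ren_up_lift1. reflexivity.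
  - destruct (H i) as [H1 H2]; [simpl in Hi; lia | simpl; rewrite Ho; auto |].
    split; [lia|].
    replace (S (S (f i))) with (S (f i) + 1) by lia.
    replace (S (S i)) with (S i + 1) by lia.
    rewrite <- !lift0_lift0, H2, ren_up_lift1. reflexivity.
Qed.

End RenEnvCompat.

Lemma ren_env_compat_shift pre e t :
  ren_env_compat (fun n => n + length pre) e (pre ++ e) t.
Proof.
  unfold ren_env_compat, env_get. intros i Hi _. split.
  - rewrite length_app. lia.
  - rewrite app_nth2 by lia. replace (i + length pre - length pre) with i by lia.
    rewrite !lift0_ren, ren_ren. apply ren_ext. intros; lia.
Qed.

Lemma ren_env_compat_lower b e t : occurs 0 t = false ->
  ren_env_compat (lower_fun 0) (b :: e) e t.
Proof.
  unfold ren_env_compat, env_get. intros H0 [|i] Hi Ho; [congruence|]. simpl in *.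
  split; [unfold lower_fun; simpl; lia|].
  unfold lower_fun at 1 2; simpl.
  rewrite !lift0_ren, ren_ren. apply ren_ext. intros n. unfold lower_fun.
  destruct (Nat.ltb_spec 0 (n + S (S i))); lia.
Qed.

(** * Parallel and silly steps *)

(* [pstep e t u n]: [t] reduces to [u] by contracting [n] weak redexes in
   parallel; an occurrence of a variable bound in the environment [e] is a
   redex, whose contraction substitutes its (unreduced) entry. *)
Inductive pstep : list term -> term -> term -> nat -> Prop :=
| ps_var : forall e i, pstep e (Var i) (Var i) 0
| ps_subst : forall e i, i < length e -> pstep e (Var i) (env_get e i) 1
| ps_lam : forall e b, pstep e (Lam b) (Lam b) 0
| ps_app : forall e a a' b b' n m, pstep e a a' n -> pstep e b b' m ->
    pstep e (App a b) (App a' b') (n + m)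
| ps_es : forall e a a' b b' n m, pstep (b :: e) a a' n -> pstep e b b' m ->
    pstep e (ES a b) (ES a' b') (n + m)
| ps_m : forall e a a' b b' r n m, pstep e a a' n -> pstep e b b' m ->
    root_m (App a' b') r -> pstep e (App a b) r (S (n + m))
| ps_gcv : forall e a a' b b' r n m, pstep (b :: e) a a' n -> pstep e b b' m ->
    root_gcv (ES a' b') r -> pstep e (ES a b) r (S (n + m)).

(* [sstep k e t u]: a call-by-silly step at a position below a context of
   kind [k] whose enclosing substitutions form the environment [e];
   a name context may not enter the argument of a substitution. *)
Inductive ctx_kind := AuxCtx | NameCtx.

Inductive sstep : ctx_kind -> list term -> term -> term -> Prop :=
| ss_m : forall k e r r', root_m r r' -> sstep k e r r'
| ss_gcv : forall k e r r', root_gcv r r' -> sstep k e r r'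
| ss_subst : forall k e i, i < length e -> sstep k e (Var i) (env_get e i)
| ss_app : forall k e a a' b, sstep NameCtx e a a' -> sstep k e (App a b) (App a' b)
| ss_body : forall k e a a' b, sstep k (b :: e) a a' -> sstep k e (ES a b) (ES a' b)
| ss_arg : forall e a b b', answer a -> sstep AuxCtx e b b' ->
    sstep AuxCtx e (ES a b) (ES a b').

Lemma pstep_count e t u n n' : pstep e t u n -> n = n' -> pstep e t u n'.
Proof. intros H <-. exact H. Qed.

Lemma pstep_refl t : forall e, pstep e t t 0.
Proof.
  induction t; intros e; try constructor.
  - apply (ps_app e _ _ _ _ 0 0); auto.
  - apply (ps_es e _ _ _ _ 0 0); auto.
Qed.

Lemma pstep_0_eq e t u : pstep e t u 0 -> t = u.
Proof.
  intros H. remember 0 as z eqn:Ez. revert Ez.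
  induction H; intros Ez; try discriminate; auto;
    f_equal; [apply IHpstep1 | apply IHpstep2 | apply IHpstep1 | apply IHpstep2]; lia.
Qed.

Lemma sstep_NameCtx k e t u : sstep NameCtx e t u -> sstep k e t u.
Proof.
  intros H. remember NameCtx as k0 eqn:E. revert E.
  induction H; intros E; subst; try discriminate.
  - apply ss_m; auto.
  - apply ss_gcv; auto.
  - apply ss_subst; auto.
  - apply ss_app; auto.
  - apply ss_body; auto.
Qed.

Lemma answer_ren t f : answer t -> answer (ren f t).
Proof. intros H. revert f. induction H; intros f; simpl; constructor; auto. Qed.

Lemma pstep_ren e t t' n : pstep e t t' n ->
  forall f e', ren_env_compat f e e' t -> pstep e' (ren f t) (ren f t') n.
Proof.
  induction 1; intros f e' Hok; simpl;
    repeat match goal with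
    | H : ren_env_compat _ _ _ (App _ _) |- _ => apply ren_env_compat_App in H as [? ?]
    end.
  - constructor.
  - destruct (Hok i) as [H1 <-]; auto. simpl. apply Nat.eqb_refl. constructor. auto.
  - constructor.
  - constructor; auto.
  - constructor; [apply IHpstep1, ren_env_compat_ES_body | apply IHpstep2,
      (ren_env_compat_ES_arg _ _ _ a)]; auto.
  - econstructor; eauto. apply (root_m_ren _ _ f) in H1. exact H1.
  - econstructor; [apply IHpstep1, ren_env_compat_ES_body | apply IHpstep2,
      (ren_env_compat_ES_arg _ _ _ a) |]; eauto.
    apply (root_gcv_ren _ _ f) in H1. exact H1.
Qed.

Lemma sstep_ren k e t t' : sstep k e t t' ->
  forall f e', ren_env_compat f e e' t -> sstep k e' (ren f t) (ren f t').
Proof.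
  induction 1; intros f e' Hok; simpl.
  - apply ss_m, root_m_ren. auto.
  - apply ss_gcv, root_gcv_ren. auto.
  - destruct (Hok i) as [H1 <-]; auto. simpl. apply Nat.eqb_refl. apply ss_subst. auto.
  - apply ss_app, IHsstep. apply ren_env_compat_App in Hok. tauto.
  - apply ss_body, IHsstep, ren_env_compat_ES_body. auto.
  - apply ss_arg; [apply answer_ren; auto|].
    apply IHsstep, (ren_env_compat_ES_arg _ _ _ a). auto.
Qed.

Lemma pstep_lift0 e t t' m pre : pstep e t t' m ->
  pstep (pre ++ e) (lift 0 (length pre) t) (lift 0 (length pre) t') m.
Proof. intros. rewrite !lift0_ren. eapply pstep_ren; eauto. apply ren_env_compat_shift. Qed.

Lemma sstep_lift0 k e t t' pre : sstep k e t t' ->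
  sstep k (pre ++ e) (lift 0 (length pre) t) (lift 0 (length pre) t').
Proof. intros. rewrite !lift0_ren. eapply sstep_ren; eauto. apply ren_env_compat_shift. Qed.

Lemma pstep_lower0 b e t t' m : pstep (b :: e) t t' m -> occurs 0 t = false ->
  pstep e (lower 0 t) (lower 0 t') m.
Proof. intros. rewrite !lower_ren. eapply pstep_ren; eauto. apply ren_env_compat_lower; auto. Qed.

Lemma sstep_lower0 k b e t t' : sstep k (b :: e) t t' -> occurs 0 t = false ->
  sstep k e (lower 0 t) (lower 0 t').
Proof. intros. rewrite !lower_ren. eapply sstep_ren; eauto. apply ren_env_compat_lower; auto. Qed.

Lemma sstep_Var_inv k e i t : sstep k e (Var i) t -> i < length e /\ t = env_get e i.
Proof. inversion 1 as [? ? ? ? Hr | ? ? ? ? Hr | | | |]; [inversion Hr | inversion Hr | auto]. Qed.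

Lemma sstep_Lam_inv k e b t : ~ sstep k e (Lam b) t.
Proof. inversion 1 as [? ? ? ? Hr | ? ? ? ? Hr | | | |]; inversion Hr. Qed.

Lemma sstep_App_inv k e a b t : sstep k e (App a b) t ->
  root_m (App a b) t \/ exists a', sstep NameCtx e a a' /\ t = App a' b.
Proof. inversion 1 as [| ? ? ? ? Hr | | | |]; [auto | inversion Hr | eauto]. Qed.

Lemma sstep_ES_inv k e a b t : sstep k e (ES a b) t ->
  root_gcv (ES a b) t \/
  (exists a', sstep k (b :: e) a a' /\ t = ES a' b) \/
  (k = AuxCtx /\ answer a /\ exists b', sstep AuxCtx e b b' /\ t = ES a b').
Proof. inversion 1 as [? ? ? ? Hr | | | | |]; [inversion Hr | auto | eauto | eauto 7]. Qed.

Lemma strict_answer_answer a : strict_answer a -> answer a.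
Proof. induction 1; constructor; auto. Qed.

Lemma answer_plugS_inv s : forall t, answer (plugS s t) -> Forall answer s /\ answer t.
Proof.
  induction s; simpl; intros t H; auto.
  inversion H as [| ? ? H1 H2]; subst. apply IHs in H1 as [? ?]. auto.
Qed.

Lemma answer_plugS s : forall t, Forall answer s -> answer t -> answer (plugS s t).
Proof. induction s; simpl; intros t H1 H2; auto. inversion H1; subst. constructor; auto. Qed.

Lemma answer_plugS_Lam a : answer a -> exists s c, a = plugS s (Lam c).
Proof.
  induction 1 as [c | a a' _ [s [c ->]] _ _].
  - exists [], c. reflexivity.
  - exists (a' :: s), c. reflexivity.
Qed.

Lemma answer_lift0 a k : answer a -> answer (lift 0 k a).
Proof. intros. rewrite lift0_ren. apply answer_ren. auto. Qed.

Lemma answer_lower0 a : answer a -> answer (lower 0 a).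
Proof. intros. rewrite lower_ren. apply answer_ren. auto. Qed.

Lemma root_gcv_answer a b r : answer a -> answer b -> root_gcv (ES a b) r -> answer r.
Proof.
  intros Ha Hb Hr. apply root_gcv_inv in Hr as (s & c & -> & _ & ->).
  apply answer_plugS_inv in Hb as [Hs _].
  apply answer_plugS, answer_lift0, answer_lower0; auto.
Qed.

Lemma pstep_answer e a a' n : pstep e a a' n -> answer a -> answer a'.
Proof.
  induction 1; intros Ha; inversion Ha; subst; try constructor; auto.
  eapply root_gcv_answer; [| |eauto]; auto.
Qed.

Lemma pstep_answer_env e a a' n : pstep e a a' n -> answer a ->
  forall e2, pstep e2 a a' n.
Proof. induction 1; intros Ha e2; inversion Ha; subst; econstructor; eauto. Qed.

Lemma sstep_answer k e a a' : sstep k e a a' -> answer a -> answer a'.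
Proof.
  intros H Ha. revert k e a' H.
  induction Ha as [c | a1 a2 Ha1 IH1 Ha2 IH2]; intros k e a' H.
  - contradiction (sstep_Lam_inv _ _ _ _ H).
  - apply sstep_ES_inv in H as [Hr | [(? & ? & ->) | (_ & _ & ? & ? & ->)]].
    + exact (root_gcv_answer _ _ _ Ha1 Ha2 Hr).
    + constructor; eauto.
    + constructor; eauto.
Qed.

Lemma sstep_answer_env k e a a' : sstep k e a a' -> answer a ->
  forall e2, sstep k e2 a a'.
Proof.
  intros H Ha. revert k e a' H.
  induction Ha as [c | a1 a2 Ha1 IH1 Ha2 IH2]; intros k e a' H e2.
  - contradiction (sstep_Lam_inv _ _ _ _ H).
  - apply sstep_ES_inv in H as [Hr | [(? & ? & ->) | (-> & ? & ? & ? & ->)]].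
    + apply ss_gcv. auto.
    + apply ss_body. eauto.
    + apply ss_arg; eauto.
Qed.

Lemma strict_answer_pstep e a a' n : pstep e a a' n -> strict_answer a -> a' = a /\ n = 0.
Proof.
  induction 1; intros Ha; inversion Ha; subst; auto.
  - destruct IHpstep1, IHpstep2; subst; auto.
  - destruct IHpstep1, IHpstep2; subst; auto.
    apply root_gcv_inv in H1 as (_ & _ & _ & ? & _). congruence.
Qed.

Lemma strict_answer_sstep k e a a' : strict_answer a -> ~ sstep k e a a'.
Proof.
  intros Ha. revert k e a'.
  induction Ha as [c | a1 a2 Ha1 IH1 Ha2 IH2 Hocc]; intros k e a' H.
  - exact (sstep_Lam_inv _ _ _ _ H).
  - apply sstep_ES_inv in H as [Hr | [(? & H & _) | (_ & _ & ? & H & _)]].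
    + apply root_gcv_inv in Hr as (_ & _ & _ & ? & _). congruence.
    + exact (IH1 _ _ _ H).
    + exact (IH2 _ _ _ H).
Qed.

Definition occurs_through (e : list term) (t : term) (c : nat) : Prop :=
  occurs c t = true \/
  exists i, i < length e /\ occurs i t = true /\ occurs c (env_get e i) = true.

Lemma occurs_through_sub e t t' c :
  (forall i, occurs i t = true -> occurs i t' = true) ->
  occurs_through e t c -> occurs_through e t' c.
Proof. intros H [H1 | (i & H1 & H2 & H3)]; [left | right; exists i]; auto. Qed.

Lemma occurs_through_App_l e a b c : occurs_through e a c -> occurs_through e (App a b) c.
Proof. apply occurs_through_sub. simpl. intros i ->. reflexivity. Qed.

Lemma occurs_through_App_r e a b c : occurs_through e b c -> occurs_through e (App a b) c.
Proof. apply occurs_through_sub. simpl. intros i ->. apply orb_true_r. Qed.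

Lemma occurs_through_ES_arg e a b c : occurs_through e b c -> occurs_through e (ES a b) c.
Proof. apply occurs_through_sub. simpl. intros i ->. apply orb_true_r. Qed.

Lemma occurs_through_ES_body e a b c :
  occurs_through (b :: e) a (S c) -> occurs_through e (ES a b) c.
Proof.
  unfold occurs_through, env_get. simpl.
  intros [H | [[|i] (H1 & H2 & H3)]]; simpl in *.
  - left. rewrite H. auto.
  - left. apply occurs_lift0 in H3 as [_ H3].
    replace (S c - 1) with c in H3 by lia. rewrite H3. auto with bool.
  - right. exists i. rewrite H2. repeat split; [lia|].
    apply occurs_lift0 in H3 as [H4 H5]. apply occurs_lift0.
    split; [lia|]. replace (c - S i) with (S c - S (S i)) by lia. auto.
Qed.

Lemma root_m_occurs r r' c : root_m r r' -> occurs c r' = true -> occurs c r = true.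
Proof.
  intros [s b u]. simpl. rewrite !occurs_plugS. simpl. intros H.
  apply orb_true_iff in H as [-> | H]; [reflexivity|].
  apply orb_true_iff in H as [-> | H]; [auto with bool|].
  apply occurs_lift0 in H as [_ H]. replace (c + length s - length s) with c in H by lia.
  rewrite H. auto with bool.
Qed.

Lemma root_gcv_occurs r r' c : root_gcv r r' -> occurs c r' = true -> occurs c r = true.
Proof.
  intros [t s v _ H0]. simpl. rewrite !occurs_plugS. intros H.
  apply orb_true_iff in H as [-> | H]; [auto with bool|].
  apply occurs_lift0 in H as [_ H]. replace (c + length s - length s) with c in H by lia.
  rewrite lower_ren in H. apply occurs_ren in H as [[|j] [Hj E]]; [congruence|].
  unfold lower_fun in E; simpl in E. subst. rewrite Hj. auto.
Qed.

Lemma pstep_occurs e t t' n : pstep e t t' n ->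
  forall c, occurs c t' = true -> occurs_through e t c.
Proof.
  induction 1; intros c Hc; simpl in *.
  - left. auto.
  - right. exists i. simpl. rewrite Nat.eqb_refl. auto.
  - left. auto.
  - apply orb_true_iff in Hc as [Hc|Hc];
      [apply occurs_through_App_l | apply occurs_through_App_r]; auto.
  - apply orb_true_iff in Hc as [Hc|Hc];
      [apply occurs_through_ES_body | apply occurs_through_ES_arg]; auto.
  - eapply root_m_occurs in Hc; eauto. simpl in Hc.
    apply orb_true_iff in Hc as [Hc|Hc];
      [apply occurs_through_App_l | apply occurs_through_App_r]; auto.
  - eapply root_gcv_occurs in Hc; eauto. simpl in Hc.
    apply orb_true_iff in Hc as [Hc|Hc];
      [apply occurs_through_ES_body | apply occurs_through_ES_arg]; auto.
Qed.

Lemma sstep_occurs k e t t' : sstep k e t t' ->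
  forall c, occurs c t' = true -> occurs_through e t c.
Proof.
  induction 1; intros c Hc; simpl in *.
  - left. eapply root_m_occurs; eauto.
  - left. eapply root_gcv_occurs; eauto.
  - right. exists i. simpl. rewrite Nat.eqb_refl. auto.
  - apply orb_true_iff in Hc as [Hc|Hc]; [apply occurs_through_App_l; auto|].
    left. simpl. rewrite Hc. apply orb_true_r.
  - apply orb_true_iff in Hc as [Hc|Hc]; [apply occurs_through_ES_body; auto|].
    left. simpl. rewrite Hc. apply orb_true_r.
  - apply orb_true_iff in Hc as [Hc|Hc]; [left; simpl; rewrite Hc; reflexivity|].
    apply occurs_through_ES_arg. auto.
Qed.

(* Environment entries are lifted past the binder of index [0]. *)
Lemma occurs_through_0 e t : occurs_through e t 0 -> occurs 0 t = true.
Proof.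
  intros [H | (i & _ & _ & H)]; auto.
  unfold env_get in H. rewrite occurs_lift0_below in H by lia. discriminate.
Qed.

Lemma pstep_occurs0 e t t' n : pstep e t t' n -> occurs 0 t = false -> occurs 0 t' = false.
Proof.
  intros H H0. destruct (occurs 0 t') eqn:E; auto.
  apply (pstep_occurs _ _ _ _ H), occurs_through_0 in E. congruence.
Qed.

Lemma sstep_occurs0 k e t t' : sstep k e t t' -> occurs 0 t = false -> occurs 0 t' = false.
Proof.
  intros H H0. destruct (occurs 0 t') eqn:E; auto.
  apply (sstep_occurs _ _ _ _ H), occurs_through_0 in E. congruence.
Qed.

Definition no_free_vars (t : term) : Prop := forall i, occurs i t = false.

Lemma occurs_through_nil t c : no_free_vars t -> ~ occurs_through [] t c.
Proof. intros Ht [H | (i & Hi & _)]; [congruence | simpl in Hi; lia]. Qed.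

Lemma pstep_no_free_vars t t' n : pstep [] t t' n -> no_free_vars t -> no_free_vars t'.
Proof.
  intros H Ht c. destruct (occurs c t') eqn:E; auto.
  contradiction (occurs_through_nil t c Ht). eapply pstep_occurs; eauto.
Qed.

Lemma sstep_no_free_vars k t t' : sstep k [] t t' -> no_free_vars t -> no_free_vars t'.
Proof.
  intros H Ht c. destruct (occurs c t') eqn:E; auto.
  contradiction (occurs_through_nil t c Ht). eapply sstep_occurs; eauto.
Qed.

Lemma closed_at_occurs t : forall n c, closed_at n t -> occurs c t = true -> c < n.
Proof.
  induction t; simpl; intros k c H Hc.
  - apply Nat.eqb_eq in Hc. lia.
  - apply (IHt (S k) (S c)) in Hc; auto. lia.
  - destruct H. apply orb_true_iff in Hc as [Hc|Hc]; eauto.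
  - destruct H. apply orb_true_iff in Hc as [Hc|Hc]; eauto.
    apply (IHt1 (S k) (S c)) in Hc; auto. lia.
Qed.

Lemma closed_no_free_vars t : closed t -> no_free_vars t.
Proof.
  intros H c. destruct (occurs c t) eqn:E; auto.
  apply (closed_at_occurs _ _ _ H) in E. lia.
Qed.

(** * Progress and soundness of silly steps *)

Lemma sstep_name_or_spine t : forall e, (forall i, occurs i t = true -> i < length e) ->
  (exists t', sstep NameCtx e t t') \/ exists s c, t = plugS s (Lam c).
Proof.
  induction t as [i | c | a IHa b _ | a IHa b _]; intros e H; simpl in H.
  - left. eexists. apply ss_subst, H, Nat.eqb_refl.
  - right. exists [], c. reflexivity.
  - left. destruct (IHa e) as [[a' Ha] | (s & c & ->)].
    + intros i Hi. apply H. rewrite Hi. auto.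
    + eexists. apply ss_app. eauto.
    + eexists. apply ss_m, RootM.
  - destruct (IHa (b :: e)) as [[a' Ha] | (s & c & ->)].
    + intros [|i] Hi; simpl; [lia|]. enough (i < length e) by lia.
      apply H. rewrite Hi. auto.
    + left. eexists. apply ss_body. eauto.
    + right. exists (b :: s), c. reflexivity.
Qed.

Lemma strict_answer_or_sstep t : forall e, (forall i, occurs i t = true -> i < length e) ->
  strict_answer t \/ exists t', sstep AuxCtx e t t'.
Proof.
  induction t as [i | c | a _ b _ | a IHa b IHb]; intros e H; simpl in H.
  - right. eexists. apply ss_subst, H, Nat.eqb_refl.
  - left. constructor.
  - right. destruct (sstep_name_or_spine a e) as [[a' Ha] | (s & c & ->)].
    + intros i Hi. apply H. rewrite Hi. auto.
    + eexists. apply ss_app. eauto.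
    + eexists. apply ss_m, RootM.
  - destruct (IHa (b :: e)) as [Ha | [a' Ha]].
    + intros [|i] Hi; simpl; [lia|]. enough (i < length e) by lia.
      apply H. rewrite Hi. auto.
    + destruct (IHb e) as [Hb | [b' Hb]].
      * intros i Hi. apply H. rewrite Hi. auto with bool.
      * destruct (occurs 0 a) eqn:E; [left; constructor; auto|].
        right. apply strict_answer_answer, answer_plugS_Lam in Hb as (s & c & ->).
        eexists. apply ss_gcv, root_gcv_intro. auto.
      * right. eexists. apply ss_arg; eauto. apply strict_answer_answer. auto.
    + right. eexists. apply ss_body. eauto.
Qed.

Fixpoint nctx_env (N : nctx) : list term :=
  match N with
  | NHole => []
  | NAppL N' _ => nctx_env N'
  | NESBody N' u => nctx_env N' ++ [u]
  end.

Fixpoint actx_env (A : actx) : list term :=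
  match A with
  | AHole => []
  | AESArg _ A' => actx_env A'
  | AESBody A' u => actx_env A' ++ [u]
  end.

Fixpoint nctx_comp (N1 N2 : nctx) : nctx :=
  match N1 with
  | NHole => N2
  | NAppL N u => NAppL (nctx_comp N N2) u
  | NESBody N u => NESBody (nctx_comp N N2) u
  end.

Fixpoint actx_comp (A1 A2 : actx) : actx :=
  match A1 with
  | AHole => A2
  | AESArg a A => AESArg a (actx_comp A A2)
  | AESBody A u => AESBody (actx_comp A A2) u
  end.

Lemma plugN_comp N1 N2 t : plugN (nctx_comp N1 N2) t = plugN N1 (plugN N2 t).
Proof. induction N1; simpl; f_equal; auto. Qed.

Lemma plugA_comp A1 A2 t : plugA (actx_comp A1 A2) t = plugA A1 (plugA A2 t).
Proof. induction A1; simpl; f_equal; auto. Qed.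

Lemma nctx_env_comp N1 N2 : nctx_env (nctx_comp N1 N2) = nctx_env N2 ++ nctx_env N1.
Proof. induction N1; simpl; rewrite ?IHN1, ?app_assoc, ?app_nil_r; auto. Qed.

Lemma actx_env_comp A1 A2 : actx_env (actx_comp A1 A2) = actx_env A2 ++ actx_env A1.
Proof. induction A1; simpl; rewrite ?IHA1, ?app_assoc, ?app_nil_r; auto. Qed.

Lemma validA_comp A1 A2 : validA (actx_comp A1 A2) <-> validA A1 /\ validA A2.
Proof. induction A1; simpl; try rewrite IHA1; tauto. Qed.

Lemma depthN_env N : depthN N = length (nctx_env N).
Proof. induction N; simpl; rewrite ?length_app; simpl; lia. Qed.

Lemma depthA_env A : depthA A = length (actx_env A).
Proof. induction A; simpl; rewrite ?length_app; simpl; lia. Qed.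

Lemma nctx_env_split N i : i < length (nctx_env N) ->
  exists N1 N2 u, N = nctx_comp N1 (NESBody N2 u) /\ length (nctx_env N2) = i /\
    nth i (nctx_env N) (Var 0) = u.
Proof.
  induction N as [| N IH u | N IH u]; simpl; intros Hi; [lia | |].
  - destruct (IH Hi) as (N1 & N2 & v & -> & E2 & E3). exists (NAppL N1 u), N2, v. auto.
  - rewrite length_app in Hi. simpl in Hi.
    destruct (Nat.lt_ge_cases i (length (nctx_env N))) as [Hl | Hl].
    + destruct (IH Hl) as (N1 & N2 & v & -> & E2 & E3). exists (NESBody N1 u), N2, v.
      rewrite app_nth1 by auto. auto.
    + exists NHole, N, u. rewrite app_nth2 by auto.
      replace (i - length (nctx_env N)) with 0 by lia. repeat split; lia.
Qed.

Lemma actx_env_split A i : i < length (actx_env A) ->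
  exists A1 A2 u, A = actx_comp A1 (AESBody A2 u) /\ length (actx_env A2) = i /\
    nth i (actx_env A) (Var 0) = u.
Proof.
  induction A as [| a A IH | A IH u]; simpl; intros Hi; [lia | |].
  - destruct (IH Hi) as (A1 & A2 & v & -> & E2 & E3). exists (AESArg a A1), A2, v. auto.
  - rewrite length_app in Hi. simpl in Hi.
    destruct (Nat.lt_ge_cases i (length (actx_env A))) as [Hl | Hl].
    + destruct (IH Hl) as (A1 & A2 & v & -> & E2 & E3). exists (AESBody A1 u), A2, v.
      rewrite app_nth1 by auto. auto.
    + exists AHole, A, u. rewrite app_nth2 by auto.
      replace (i - length (actx_env A)) with 0 by lia. repeat split; lia.
Qed.

Lemma y_step_subst A N i : validA A -> i < length (nctx_env N ++ actx_env A) ->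
  y_step (plugY A N (Var i)) (plugY A N (env_get (nctx_env N ++ actx_env A) i)).
Proof.
  unfold plugY, env_get. intros HA Hi. rewrite length_app in Hi.
  destruct (Nat.lt_ge_cases i (length (nctx_env N))) as [Hl | Hl].
  - destruct (nctx_env_split N i Hl) as (N1 & N2 & u & -> & Hlen & Hu).
    rewrite app_nth1, Hu by auto. rewrite !plugN_comp. simpl.
    pose proof (Y_eYN A N1 _ _ HA (RootEN N2 u)) as Y.
    rewrite depthN_env, Hlen in Y. exact Y.
  - destruct (actx_env_split A (i - length (nctx_env N))) as (A1 & A2 & u & -> & Hlen & Hu);
      [lia|].
    rewrite app_nth2, Hu by auto.
    apply validA_comp in HA as [HA1 HA2]. rewrite !plugA_comp. simpl.
    pose proof (Y_eAY A1 _ _ HA1 (RootEY A2 N u HA2)) as Y.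
    unfold depthY, plugY in Y. rewrite depthN_env, depthA_env, Hlen in Y.
    replace (i - length (nctx_env N) + length (nctx_env N)) with i in Y by lia. exact Y.
Qed.

Lemma sstep_y_step_in_ctx k e t t' : sstep k e t t' ->
  forall A N, validA A -> (k = AuxCtx -> N = NHole) -> e = nctx_env N ++ actx_env A ->
  y_step (plugY A N t) (plugY A N t').
Proof.
  induction 1 as [k e r r' H | k e r r' H | k e i Hi | k e a a' b _ IH | k e a a' b _ IH
                 | e a b b' Ha _ IH];
    intros A N HA HN ->.
  - exact (Y_m A N r r' HA H).
  - exact (Y_gcv A N r r' HA H).
  - apply y_step_subst; auto.
  - specialize (IH A (nctx_comp N (NAppL NHole b)) HA ltac:(discriminate)).
    unfold plugY in *. rewrite !plugN_comp in IH. apply IH.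
    rewrite nctx_env_comp. reflexivity.
  - destruct k.
    + rewrite (HN eq_refl) in *. unfold plugY in *. simpl.
      specialize (IH (actx_comp A (AESBody AHole b)) NHole).
      rewrite !plugA_comp in IH. apply IH; auto.
      * apply validA_comp. simpl. auto.
      * rewrite actx_env_comp. reflexivity.
    + specialize (IH A (nctx_comp N (NESBody NHole b)) HA ltac:(discriminate)).
      unfold plugY in *. rewrite !plugN_comp in IH. apply IH.
      rewrite nctx_env_comp. reflexivity.
  - rewrite (HN eq_refl) in *. unfold plugY in *. simpl.
    specialize (IH (actx_comp A (AESArg a AHole)) NHole).
    rewrite !plugA_comp in IH. apply IH; auto.
    + apply validA_comp. simpl. auto.
    + rewrite actx_env_comp. reflexivity.
Qed.

Lemma sstep_y_step t t' : sstep AuxCtx [] t t' -> y_step t t'.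
Proof. intros H. exact (sstep_y_step_in_ctx _ _ _ _ H AHole NHole I (fun _ => eq_refl) eq_refl). Qed.

(** * Weak steps are parallel steps *)

Fixpoint wctx_env (W : wctx) : list term :=
  match W with
  | WHole => []
  | WAppL W' _ | WAppR _ W' | WESArg _ W' => wctx_env W'
  | WESBody W' u => wctx_env W' ++ [u]
  end.

Lemma depthW_env W : depthW W = length (wctx_env W).
Proof. induction W; simpl; rewrite ?length_app; simpl; lia. Qed.

Lemma pstep_plugW W : forall e r r', pstep (wctx_env W ++ e) r r' 1 ->
  pstep e (plugW W r) (plugW W r') 1.
Proof.
  induction W; simpl; intros e r r' H; auto.
  - apply (ps_app _ _ _ _ _ 1 0); auto using pstep_refl.
  - apply (ps_app _ _ _ _ _ 0 1); auto using pstep_refl.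
  - apply (ps_es _ _ _ _ _ 0 1); auto using pstep_refl.
  - apply (ps_es _ _ _ _ _ 1 0); auto using pstep_refl.
    apply IHW. rewrite <- app_assoc in H. exact H.
Qed.

Lemma w_root_pstep e r r' : w_root r r' -> pstep e r r' 1.
Proof.
  intros [r0 r0' [s b u] | r0 r0' [K u] | r0 r0' [a s v Hv Ha]].
  - eapply (ps_m e _ _ _ _ _ 0 0); [apply pstep_refl | apply pstep_refl | constructor].
  - apply (ps_es _ _ _ _ _ 1 0); [|apply pstep_refl].
    apply pstep_plugW.
    replace (lift 0 (S (depthW K)) u) with (env_get (wctx_env K ++ u :: e) (depthW K)).
    + apply ps_subst. rewrite length_app, depthW_env. simpl. lia.
    + unfold env_get. rewrite app_nth2, depthW_env, Nat.sub_diag; rewrite ?depthW_env; auto.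
  - eapply (ps_gcv e _ _ _ _ _ 0 0); [apply pstep_refl | apply pstep_refl | constructor; auto].
Qed.

Lemma w_step_pstep t u : w_step t u -> pstep [] t u 1.
Proof. intros [W r r' H]. apply pstep_plugW, w_root_pstep. auto. Qed.

Definition gcv_ren (j : nat) : nat -> nat := fun n => lower_fun 0 n + j.

Lemma gcv_reduct_plugS sv s X :
  plugS sv (lift 0 (length sv) (lower 0 (plugS s X))) =
  plugS (sv ++ rens (gcv_ren (length sv)) s) (ren (upn (length s) (gcv_ren (length sv))) X).
Proof. rewrite plugS_app, lift0_ren, lower_ren, ren_ren, ren_plugS. reflexivity. Qed.

Lemma ren_gcv_lift j k Q : ren (upn k (gcv_ren j)) (lift 0 (S k) Q) = lift 0 (j + k) Q.
Proof.
  rewrite !lift0_ren, ren_ren. apply ren_ext. intros n. unfold upn, gcv_ren, lower_fun.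
  destruct (Nat.ltb_spec (n + S k) k); [lia|].
  replace (n + S k - k) with (S n) by lia. simpl. lia.
Qed.

(* What remains in the hole of [S] once the spine [S<\x.c>] is consumed by
   the m rule ([c[x\X]]) or by the gcv rule ([X]). *)
Definition spine_hole (by_m : bool) (c X : term) : term := if by_m then ES c X else X.

Lemma ren_spine_hole by_m j k c Q :
  ren (upn k (gcv_ren j)) (spine_hole by_m c (lift 0 (S k) Q)) =
  spine_hole by_m (ren (up (upn k (gcv_ren j))) c) (lift 0 (j + k) Q).
Proof. destruct by_m; simpl; rewrite ren_gcv_lift; reflexivity. Qed.

Lemma occurs0_spine_hole by_m s c Q : occurs 0 (plugS s (Lam c)) = false ->
  occurs 0 (plugS s (spine_hole by_m c (lift 0 (S (length s)) Q))) = false.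
Proof.
  rewrite !occurs_plugS. intros [-> Hc]%orb_false_iff.
  destruct by_m; simpl in *; rewrite ?Hc, occurs_lift0_below by lia; reflexivity.
Qed.

Lemma gcv_spine_step sv w s c by_m Q :
  occurs 0 (plugS s (Lam c)) = false ->
  root_gcv (ES (plugS s (spine_hole by_m c (lift 0 (S (length s)) Q))) (plugS sv (Lam w)))
    (plugS (sv ++ rens (gcv_ren (length sv)) s)
       (spine_hole by_m (ren (up (upn (length s) (gcv_ren (length sv)))) c)
          (lift 0 (length (sv ++ rens (gcv_ren (length sv)) s)) Q))).
Proof.
  intros Hocc. rewrite length_app, length_rens, <- ren_spine_hole, <- gcv_reduct_plugS.
  apply root_gcv_intro, occurs0_spine_hole. auto.
Qed.

Definition spine_replay e s s' c c' n : Prop :=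
  forall by_m Q Q' m, pstep e Q Q' m ->
    pstep e (plugS s (spine_hole by_m c (lift 0 (length s) Q)))
            (plugS s' (spine_hole by_m c' (lift 0 (length s') Q'))) (n + m).

Lemma spine_replay_nil e c : spine_replay e [] [] c c 0.
Proof.
  intros [] Q Q' m HQ; simpl; rewrite !lift0_0; auto.
  apply (ps_es _ _ _ _ _ 0 m); auto using pstep_refl.
Qed.

Lemma spine_replay_cons e u u' s s' c c' n k :
  spine_replay (u :: e) s s' c c' n -> pstep e u u' k ->
  spine_replay e (u :: s) (u' :: s') c c' (n + k).
Proof.
  intros P Hu by_m Q Q' m HQ. simpl. rewrite (lift_S Q), (lift_S Q').
  eapply pstep_count; [apply ps_es; [apply P, (pstep_lift0 _ _ _ _ [u] HQ) | exact Hu] | lia].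
Qed.

Lemma spine_replay_gcv e u sv w s s' c c' n k :
  spine_replay (u :: e) s s' c c' n -> pstep e u (plugS sv (Lam w)) k ->
  occurs 0 (plugS s' (Lam c')) = false ->
  spine_replay e (u :: s) (sv ++ rens (gcv_ren (length sv)) s')
    c (ren (up (upn (length s') (gcv_ren (length sv)))) c') (S (n + k)).
Proof.
  intros P Hu Hocc by_m Q Q' m HQ. simpl. rewrite (lift_S Q).
  eapply pstep_count.
  - eapply ps_gcv; [| exact Hu | apply gcv_spine_step, Hocc].
    rewrite (lift_S Q'). apply P, (pstep_lift0 _ _ _ _ [u] HQ).
  - lia.
Qed.

Lemma pstep_ES_inv e a b t n : pstep e (ES a b) t n ->
  exists a' b' n1 n2, pstep (b :: e) a a' n1 /\ pstep e b b' n2 /\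
    ((t = ES a' b' /\ n = n1 + n2) \/ (root_gcv (ES a' b') t /\ n = S (n1 + n2))).
Proof. inversion 1; subst; eauto 10. Qed.

Lemma pstep_spine s : forall e c t n, pstep e (plugS s (Lam c)) t n ->
  exists s' c', t = plugS s' (Lam c') /\ spine_replay e s s' c c' n.
Proof.
  induction s as [|u s IH]; intros e c t n H; simpl in H.
  - inversion H; subst. exists [], c. auto using spine_replay_nil.
  - apply pstep_ES_inv in H as (a' & u' & n1 & n2 & Ha & Hu & [[-> ->] | [Hr ->]]);
      destruct (IH _ _ _ _ Ha) as (s' & c' & -> & P).
    + exists (u' :: s'), c'. auto using spine_replay_cons.
    + apply root_gcv_inv in Hr as (sv & w & -> & Hocc & ->).
      rewrite gcv_reduct_plugS. eexists _, _. split; [reflexivity|].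
      eapply spine_replay_gcv; eauto.
Qed.

Lemma sstep_spine_name s : forall e c t, sstep NameCtx e (plugS s (Lam c)) t ->
  exists s' c', t = plugS s' (Lam c') /\
    forall Q, sstep NameCtx e (plugS s (ES c (lift 0 (length s) Q)))
                             (plugS s' (ES c' (lift 0 (length s') Q))).
Proof.
  induction s as [|u s IH]; intros e c t H; simpl in H.
  - contradiction (sstep_Lam_inv _ _ _ _ H).
  - apply sstep_ES_inv in H as [Hr | [(a' & Ha & ->) | [? _]]]; [| | discriminate].
    + apply root_gcv_inv in Hr as (sv & w & -> & Hocc & ->).
      rewrite gcv_reduct_plugS. eexists _, _. split; [reflexivity|].
      intros Q. apply ss_gcv. exact (gcv_spine_step sv w s c true Q Hocc).
    + destruct (IH _ _ _ Ha) as (s' & c' & -> & P).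
      exists (u :: s'), c'. split; [reflexivity|]. intros Q. simpl.
      rewrite (lift_S Q (length s)), (lift_S Q (length s')). apply ss_body, P.
Qed.

Lemma sstep_spine_aux s : forall e c t, sstep AuxCtx e (plugS s (Lam c)) t ->
  exists s' c', t = plugS s' (Lam c') /\
    forall Q, answer Q -> sstep AuxCtx e (plugS s (lift 0 (length s) Q))
                                        (plugS s' (lift 0 (length s') Q)).
Proof.
  induction s as [|u s IH]; intros e c t H; simpl in H.
  - contradiction (sstep_Lam_inv _ _ _ _ H).
  - apply sstep_ES_inv in H as [Hr | [(a' & Ha & ->) | (_ & Hans & u' & Hu & ->)]].
    + apply root_gcv_inv in Hr as (sv & w & -> & Hocc & ->).
      rewrite gcv_reduct_plugS. eexists _, _. split; [reflexivity|].
      intros Q _. apply ss_gcv. exact (gcv_spine_step sv w s c false Q Hocc).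
    + destruct (IH _ _ _ Ha) as (s' & c' & -> & P).
      exists (u :: s'), c'. split; [reflexivity|]. intros Q HQ. simpl.
      rewrite (lift_S Q (length s)), (lift_S Q (length s')). apply ss_body, P, answer_lift0, HQ.
    + exists (u' :: s), c. split; [reflexivity|]. intros Q HQ. simpl.
      apply ss_arg; [|exact Hu].
      apply answer_plugS_inv in Hans as [Hs _]. apply answer_plugS, answer_lift0; auto.
Qed.

(** * Residuals of a silly step after a parallel step *)

Inductive env_pstep : list term -> list term -> Prop :=
| envp_nil : env_pstep [] []
| envp_cons : forall u u' e e' k, pstep e u u' k -> env_pstep e e' ->
    env_pstep (u :: e) (u' :: e').

Lemma env_pstep_length e e' : env_pstep e e' -> length e = length e'.
Proof. induction 1; simpl; auto. Qed.

Lemma env_pstep_get e e' i : env_pstep e e' -> i < length e ->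
  exists k, pstep e (env_get e i) (env_get e' i) k.
Proof.
  intros H Hi. enough (exists k, pstep (skipn (S i) e) (nth i e (Var 0)) (nth i e' (Var 0)) k)
    as [k Hk].
  { exists k. pose proof (pstep_lift0 _ _ _ _ (firstn (S i) e) Hk) as P.
    rewrite firstn_skipn, firstn_length_le in P by lia. exact P. }
  revert i Hi. induction H as [| u u' e e' k Hu _ IH]; simpl; intros i Hi; [lia|].
  destruct i as [|i]; simpl; eauto. apply IH. lia.
Qed.

Lemma sstep_plugS s : forall k e t t', sstep k (rev s ++ e) t t' ->
  sstep k e (plugS s t) (plugS s t').
Proof.
  induction s as [|u s IH]; simpl; intros k e t t' H; auto.
  apply ss_body, IH. rewrite <- app_assoc in H. exact H.
Qed.

Lemma sstep_gcv_reduct k e b a a' sv : sstep k (b :: e) a a' -> occurs 0 a = false ->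
  sstep k e (plugS sv (lift 0 (length sv) (lower 0 a)))
            (plugS sv (lift 0 (length sv) (lower 0 a'))).
Proof.
  intros H Hocc. apply sstep_plugS. rewrite <- length_rev.
  apply sstep_lift0, (sstep_lower0 _ b); auto.
Qed.

(* Either the silly step is one of the redexes of the parallel step, or it
   can be mirrored after it by a silly step, at no smaller parallel cost. *)
Definition sstep_residual (e : list term) (t u : term) (n : nat) : Prop :=
  forall k t1 e', sstep k e t t1 -> env_pstep e e' ->
    (exists n', n = S n' /\ pstep e t1 u n') \/
    (exists u1 m, sstep k e' u u1 /\ pstep e t1 u1 m /\ n <= m).

Section Residuals.
Variable e : list term.

Lemma residual_var i : sstep_residual e (Var i) (Var i) 0.
Proof.
  intros k t1 e' Hy Her. apply sstep_Var_inv in Hy as [Hi ->].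
  right. destruct (env_pstep_get _ _ i Her Hi) as [m Hm].
  exists (env_get e' i), m. repeat split; [|exact Hm|lia].
  apply ss_subst. rewrite <- (env_pstep_length _ _ Her). exact Hi.
Qed.

Lemma residual_subst i : sstep_residual e (Var i) (env_get e i) 1.
Proof.
  intros k t1 e' Hy _. apply sstep_Var_inv in Hy as [_ ->].
  left. exists 0. auto using pstep_refl.
Qed.

Lemma residual_app a a' b b' n m : pstep e a a' n -> pstep e b b' m ->
  sstep_residual e a a' n -> sstep_residual e (App a b) (App a' b') (n + m).
Proof.
  intros Ha Hb IHa k t1 e' Hy Her.
  apply sstep_App_inv in Hy as [Hr | (a1 & Hy & ->)].
  - apply root_m_inv in Hr as (s & c & -> & ->).
    destruct (pstep_spine _ _ _ _ _ Ha) as (s' & c' & -> & P).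
    right. eexists _, _. split; [apply ss_m, RootM|].
    split; [apply (P true); exact Hb | lia].
  - destruct (IHa _ _ _ Hy Her) as [(n' & -> & L) | (u1 & m1 & R1 & R2 & R3)].
    + left. exists (n' + m). split; [lia|]. apply ps_app; auto.
    + right. exists (App u1 b'), (m1 + m). split; [apply ss_app; exact R1|].
      split; [apply ps_app; auto | lia].
Qed.

Lemma residual_es a a' b b' n m : pstep (b :: e) a a' n -> pstep e b b' m ->
  sstep_residual (b :: e) a a' n -> sstep_residual e b b' m ->
  sstep_residual e (ES a b) (ES a' b') (n + m).
Proof.
  intros Ha Hb IHa IHb k t1 e' Hy Her.
  apply sstep_ES_inv in Hy as [Hr | [(a1 & Hy & ->) | (-> & Hans & b1 & Hy & ->)]].
  - apply root_gcv_inv in Hr as (s & c & -> & Hocc & ->).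
    destruct (pstep_spine _ _ _ _ _ Hb) as (s' & c' & -> & P).
    right. eexists _, _. split.
    + apply ss_gcv, root_gcv_intro. eapply pstep_occurs0; eauto.
    + split; [apply (P false); eapply pstep_lower0; eauto | lia].
  - destruct (IHa _ _ _ Hy (envp_cons _ _ _ _ _ Hb Her))
      as [(n' & -> & L) | (u1 & m1 & R1 & R2 & R3)].
    + left. exists (n' + m). split; [lia|]. apply ps_es; auto.
    + right. exists (ES u1 b'), (m1 + m). split; [apply ss_body; exact R1|].
      split; [apply ps_es; auto | lia].
  - assert (Ha1 : pstep (b1 :: e) a a' n) by (eapply pstep_answer_env; eauto).
    destruct (IHb _ _ _ Hy Her) as [(m' & -> & L) | (u1 & m1 & R1 & R2 & R3)].
    + left. exists (n + m'). split; [lia|]. apply ps_es; auto.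
    + right. exists (ES a' u1), (n + m1).
      split; [apply ss_arg; [eapply pstep_answer; eauto | exact R1]|].
      split; [apply ps_es; auto | lia].
Qed.

Lemma residual_m a a' b b' r n m : pstep e a a' n -> pstep e b b' m ->
  root_m (App a' b') r -> sstep_residual e a a' n ->
  sstep_residual e (App a b) r (S (n + m)).
Proof.
  intros Ha Hb Hr IHa k t1 e' Hy Her.
  apply sstep_App_inv in Hy as [Hr1 | (a1 & Hy & ->)].
  - apply root_m_inv in Hr1 as (s & c & -> & ->).
    destruct (pstep_spine _ _ _ _ _ Ha) as (s' & c' & -> & P).
    rewrite (root_m_fun _ _ _ Hr (RootM s' c' b')).
    left. exists (n + m). split; [reflexivity|]. apply (P true); exact Hb.
  - destruct (IHa _ _ _ Hy Her) as [(n' & -> & L) | (u1 & m1 & R1 & R2 & R3)].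
    + left. exists (S (n' + m)). split; [lia|]. eapply ps_m; eauto.
    + apply root_m_inv in Hr as (s2 & c2 & -> & ->).
      destruct (sstep_spine_name _ _ _ _ R1) as (s3 & c3 & -> & P).
      right. eexists _, _. split; [apply sstep_NameCtx, P|].
      split; [eapply ps_m; [exact R2 | exact Hb | apply RootM] | lia].
Qed.

Lemma residual_gcv a a' b b' r n m : pstep (b :: e) a a' n -> pstep e b b' m ->
  root_gcv (ES a' b') r -> sstep_residual (b :: e) a a' n -> sstep_residual e b b' m ->
  sstep_residual e (ES a b) r (S (n + m)).
Proof.
  intros Ha Hb Hr IHa IHb k t1 e' Hy Her.
  apply root_gcv_inv in Hr as (s2 & c2 & -> & Hocc' & ->).
  apply sstep_ES_inv in Hy as [Hr | [(a1 & Hy & ->) | (-> & Hans & b1 & Hy & ->)]].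
  - apply root_gcv_inv in Hr as (s & c & -> & Hocc & ->).
    destruct (pstep_spine _ _ _ _ _ Hb) as (s' & c' & E & P).
    apply plugS_Lam_inj in E as [<- <-].
    left. exists (m + n). split; [lia|]. apply (P false). eapply pstep_lower0; eauto.
  - destruct (IHa _ _ _ Hy (envp_cons _ _ _ _ _ Hb Her))
      as [(n' & -> & L) | (u1 & m1 & R1 & R2 & R3)].
    + left. exists (S (n' + m)). split; [lia|].
      eapply ps_gcv; [exact L | exact Hb | apply root_gcv_intro; exact Hocc'].
    + right. eexists _, (S (m1 + m)). split; [eapply sstep_gcv_reduct; eauto|].
      split; [|lia]. eapply ps_gcv; [exact R2 | exact Hb |].
      apply root_gcv_intro. eapply sstep_occurs0; eauto.
  - assert (Ha1 : pstep (b1 :: e) a a' n) by (eapply pstep_answer_env; eauto).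
    destruct (IHb _ _ _ Hy Her) as [(m' & -> & L) | (u1 & m1 & R1 & R2 & R3)].
    + left. exists (S (n + m')). split; [lia|].
      eapply ps_gcv; [exact Ha1 | exact L | apply root_gcv_intro; exact Hocc'].
    + destruct (sstep_spine_aux _ _ _ _ R1) as (s3 & c3 & -> & P).
      right. eexists _, (S (n + m1)).
      split; [apply P, answer_lower0; eapply pstep_answer; eauto|].
      split; [|lia]. eapply ps_gcv; [exact Ha1 | exact R2 | apply root_gcv_intro; exact Hocc'].
Qed.

End Residuals.

Lemma pstep_sstep_residual e t u n : pstep e t u n -> sstep_residual e t u n.
Proof.
  intros H. induction H.
  - apply residual_var.
  - apply residual_subst.
  - intros k t1 e' Hy. contradiction (sstep_Lam_inv _ _ _ _ Hy).
  - apply residual_app; auto.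
  - apply residual_es; auto.
  - eapply residual_m; eauto.
  - eapply residual_gcv; eauto.
Qed.

(** * Silly steps have the diamond property *)

Definition sjoinable (k : ctx_kind) (e : list term) (t1 t2 : term) : Prop :=
  t1 = t2 \/ exists s, sstep k e t1 s /\ sstep k e t2 s.

Lemma sjoinable_sym k e t1 t2 : sjoinable k e t1 t2 -> sjoinable k e t2 t1.
Proof. intros [-> | (s & H1 & H2)]; [left | right; exists s]; auto. Qed.

Lemma sjoinable_m_app k e a b t1 a2 : root_m (App a b) t1 -> sstep NameCtx e a a2 ->
  sjoinable k e t1 (App a2 b).
Proof.
  intros Hr Hy. apply root_m_inv in Hr as (s & c & -> & ->).
  destruct (sstep_spine_name _ _ _ _ Hy) as (s2 & c2 & -> & P).
  right. eexists. split; [apply sstep_NameCtx, P | apply ss_m, RootM].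
Qed.

Lemma sjoinable_gcv_body k e a b t1 a2 : root_gcv (ES a b) t1 -> sstep k (b :: e) a a2 ->
  sjoinable k e t1 (ES a2 b).
Proof.
  intros Hr Hy. apply root_gcv_inv in Hr as (s & c & -> & Hocc & ->).
  right. eexists. split; [eapply sstep_gcv_reduct; eauto|].
  apply ss_gcv, root_gcv_intro. eapply sstep_occurs0; eauto.
Qed.

Lemma sjoinable_gcv_arg e a b t1 b2 : root_gcv (ES a b) t1 -> answer a ->
  sstep AuxCtx e b b2 -> sjoinable AuxCtx e t1 (ES a b2).
Proof.
  intros Hr Ha Hy. apply root_gcv_inv in Hr as (s & c & -> & Hocc & ->).
  destruct (sstep_spine_aux _ _ _ _ Hy) as (s2 & c2 & -> & P).
  right. eexists. split; [apply P, answer_lower0, Ha | apply ss_gcv, root_gcv_intro, Hocc].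
Qed.

Lemma sjoinable_body_arg e a b a1 b2 : answer a -> sstep AuxCtx (b :: e) a a1 ->
  sstep AuxCtx e b b2 -> sjoinable AuxCtx e (ES a1 b) (ES a b2).
Proof.
  intros Ha H1 H2. right. exists (ES a1 b2). split.
  - apply ss_arg; [eapply sstep_answer|]; eauto.
  - apply ss_body. eapply sstep_answer_env; eauto.
Qed.

Lemma sstep_diamond k e t t1 t2 : sstep k e t t1 -> sstep k e t t2 -> sjoinable k e t1 t2.
Proof.
  intros H1. revert t2.
  induction H1 as [k e r r1 Hr | k e r r1 Hr | k e i Hi | k e a a1 b H1 IH
                  | k e a a1 b H1 IH | e a b b1 Ha H1 IH]; intros t2 H2.
  - destruct Hr as [s c u].
    apply sstep_App_inv in H2 as [Hr2 | (a2 & H2 & ->)].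
    + left. eapply root_m_fun; [constructor | exact Hr2].
    + eapply sjoinable_m_app; [constructor | exact H2].
  - destruct Hr as [a s v Hv Hocc]. apply sstep_ES_inv in H2
      as [Hr2 | [(a2 & H2 & ->) | (-> & Ha & b2 & H2 & ->)]].
    + left. eapply root_gcv_fun; [constructor | exact Hr2]; auto.
    + eapply sjoinable_gcv_body; [constructor | exact H2]; auto.
    + eapply sjoinable_gcv_arg; [constructor | | exact H2]; auto.
  - apply sstep_Var_inv in H2 as [_ ->]. left. reflexivity.
  - apply sstep_App_inv in H2 as [Hr2 | (a2 & H2 & ->)].
    + apply sjoinable_sym. eapply sjoinable_m_app; eauto.
    + destruct (IH _ H2) as [-> | (s & Hs1 & Hs2)]; [left; reflexivity|].
      right. exists (App s b). split; apply ss_app; auto.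
  - apply sstep_ES_inv in H2 as [Hr2 | [(a2 & H2 & ->) | (-> & Ha & b2 & H2 & ->)]].
    + apply sjoinable_sym. eapply sjoinable_gcv_body; eauto.
    + destruct (IH _ H2) as [-> | (s & Hs1 & Hs2)]; [left; reflexivity|].
      right. exists (ES s b). split; apply ss_body; auto.
    + eapply sjoinable_body_arg; eauto.
  - apply sstep_ES_inv in H2 as [Hr2 | [(a2 & H2 & ->) | (_ & _ & b2 & H2 & ->)]].
    + apply sjoinable_sym. eapply sjoinable_gcv_arg; eauto.
    + apply sjoinable_sym. eapply sjoinable_body_arg; eauto.
    + destruct (IH _ H2) as [-> | (s & Hs1 & Hs2)]; [left; reflexivity|].
      right. exists (ES a s). split; apply ss_arg; auto.
Qed.

(* Hence every reduction to a normal form has the same length. *)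
Lemma ssteps_to_normal_step k e n t a t1 :
  nsteps (sstep k e) n t a -> (forall x, ~ sstep k e a x) -> sstep k e t t1 ->
  exists n', n = S n' /\ nsteps (sstep k e) n' t1 a.
Proof.
  intros H Hnf. revert t1.
  induction H as [t | n t u v Hu Huv IH]; intros t1 Ht1.
  - contradiction (Hnf t1).
  - destruct (sstep_diamond _ _ _ _ _ Hu Ht1) as [-> | (x & Hx1 & Hx2)].
    + exists n. auto.
    + destruct (IH Hnf x Hx1) as (n0 & -> & Hn0).
      exists (S n0). split; [reflexivity|]. econstructor; eauto.
Qed.

(** * Postponement of weak steps *)

Lemma nsteps_mono (R R' : term -> term -> Prop) n t u :
  (forall x y, R x y -> R' x y) -> nsteps R n t u -> nsteps R' n t u.
Proof. intros HR. induction 1; econstructor; eauto. Qed.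

Lemma pstep_ssteps_postpone a k : strict_answer a ->
  forall n t u, no_free_vars t -> pstep [] t u n -> 1 <= n ->
  nsteps (sstep AuxCtx []) k u a -> exists k', nsteps (sstep AuxCtx []) k' t a /\ S k <= k'.
Proof.
  intros Ha. assert (Hnf : forall x, ~ sstep AuxCtx [] a x)
    by (intros x; apply strict_answer_sstep, Ha).
  induction k as [k IHk] using lt_wf_ind.
  intros n. induction n as [|n IHn]; intros t u Ht Hp Hn Hk; [lia|].
  destruct (strict_answer_or_sstep t []) as [Hs | [t1 Ht1]].
  { intros i Hi. rewrite Ht in Hi. discriminate. }
  { apply (strict_answer_pstep _ _ _ _ Hp) in Hs as [_ Hs]. lia. }
  assert (Ht1c : no_free_vars t1) by (eapply sstep_no_free_vars; eauto).
  destruct (pstep_sstep_residual _ _ _ _ Hp _ _ _ Ht1 envp_nil)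
    as [(n' & E & L) | (u1 & m & R1 & R2 & R3)].
  - injection E as <-. destruct n as [|n].
    + apply pstep_0_eq in L as <-. exists (S k). split; [econstructor; eauto | lia].
    + destruct (IHn t1 u Ht1c L ltac:(lia) Hk) as (k' & Hk' & Hle).
      exists (S k'). split; [econstructor; eauto | lia].
  - destruct (ssteps_to_normal_step _ _ _ _ _ _ Hk Hnf R1) as (k0 & -> & Hk0).
    destruct (IHk k0 ltac:(lia) m t1 u1 Ht1c R2 ltac:(lia) Hk0) as (k' & Hk' & Hle).
    exists (S k'). split; [econstructor; eauto | lia].
Qed.

Lemma wsteps_ssteps a h t : strict_answer a -> no_free_vars t -> nsteps w_step h t a ->
  exists k, nsteps (sstep AuxCtx []) k t a /\ h <= k.
Proof.
  intros Ha Ht H. revert Ht. induction H as [t | h t u v Hw _ IH]; intros Ht.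
  - exists 0. split; [constructor | lia].
  - pose proof (w_step_pstep _ _ Hw) as Hp.
    destruct (IH Ha (pstep_no_free_vars _ _ _ Hp Ht)) as (k & Hk & Hle).
    destruct (pstep_ssteps_postpone v k Ha 1 t u Ht Hp ltac:(lia) Hk) as (k' & Hk' & Hle').
    exists k'. split; [exact Hk' | lia].
Qed.

Theorem proposition12p7 :
  forall (t a_s : term) (h : nat),
    closed t -> strict_answer a_s -> nsteps w_step h t a_s ->
    exists k : nat, nsteps y_step k t a_s /\ h <= k.
Proof.
  intros t a h Hc Ha H.
  destruct (wsteps_ssteps a h t Ha (closed_no_free_vars _ Hc) H) as (k & Hk & Hle).
  exists k. split; [|exact Hle]. exact (nsteps_mono _ _ _ _ _ sstep_y_step Hk).
Qed.
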